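(* Let $A\subseteq M\preccurlyeq N$ be models of a complete affine theory. Then $\mathrm{dcl}_M(A)=\mathrm{dcl}_N(A)$.
   Context: Affine continuous logic: $L$-structures are complete metric spaces $(M,d)$ with $d\le1$ and Lipschitz interpretations of function symbols and $[0,1]$-valued relation symbols. Affine formulas are built from $1$ and atomic formulas (including $d$) using only $r\cdot\phi$ ($r\in\mathbb R$), $\phi+\psi$, $\inf_x$, $\sup_x$; $M\preccurlyeq N$ means $M\subseteq N$ and every affine formula with parameters from $M$ has the same value in $M$ and $N$. A predicate $P:M\to\mathbb R$ is $A$-definable if it is a uniform limit on $M$ of interpretations of affine formulas with parameters from $A$. An element $a\in M$ is $A$-definable in $M$ if the predicate $x\mapsto d(x,a)$ on $M$ is $A$-definable; $\mathrm{dcl}_M(A)$ is the set of elements of $M$ that are $A$-definable in $M$. *)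

From HB Require Import structures.
From mathcomp Require Import all_boot all_order all_algebra.
From mathcomp Require Import classical_sets boolp reals Rstruct.
Unset Printing Implicit Defensive.
Import Order.TTheory GRing.Theory Num.Theory.
Local Open Scope ring_scope.
Local Open Scope classical_set_scope.

Notation R := Rdefinitions.R.

Record language := Language {
  fsym : Type;
  farity : fsym -> nat;
  rsym : Type;
  rarity : rsym -> nat }.
Arguments farity {l} _.
Arguments rarity {l} _.

Inductive term (L : language) : Type :=
| TVar : nat -> term L
| TApp : forall f : fsym L, ('I_(farity f) -> term L) -> term L.

Inductive formula (L : language) : Type :=
| FOne : formula L
| FDist : term L -> term L -> formula L
| FRel : forall r : rsym L, ('I_(rarity r) -> term L) -> formula L
| FScale : R -> formula L -> formula L
| FAdd : formula L -> formula L -> formula L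
| FInf : nat -> formula L -> formula L
| FSup : nat -> formula L -> formula L.

Arguments TVar {L}.
Arguments TApp {L}.
Arguments FOne {L}.
Arguments FDist {L}.
Arguments FRel {L}.
Arguments FScale {L}.
Arguments FAdd {L}.
Arguments FInf {L}.
Arguments FSup {L}.

Fixpoint tfree {L : language} (v : nat) (t : term L) : Prop :=
  match t with
  | TVar n => n = v
  | TApp f ts => exists i, tfree v (ts i)
  end.

Fixpoint ffree {L : language} (v : nat) (phi : formula L) : Prop :=
  match phi with
  | FOne => False
  | FDist t1 t2 => tfree v t1 \/ tfree v t2
  | FRel r ts => exists i, tfree v (ts i)
  | FScale _ psi => ffree v psi
  | FAdd psi chi => ffree v psi \/ ffree v chi
  | FInf x psi => v <> x /\ ffree v psi
  | FSup x psi => v <> x /\ ffree v psi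
  end.

Definition sentence {L : language} (phi : formula L) := forall v, ~ ffree v phi.

Definition lipschitz_fun {T : Type} (d : T -> T -> R) {n : nat}
    (g : ('I_n -> T) -> T) :=
  exists K : R, forall x y : 'I_n -> T,
    d (g x) (g y) <= K * \sum_(i < n) d (x i) (y i).

Definition lipschitz_pred {T : Type} (d : T -> T -> R) {n : nat}
    (g : ('I_n -> T) -> R) :=
  exists K : R, forall x y : 'I_n -> T,
    `|g x - g y| <= K * \sum_(i < n) d (x i) (y i).

Definition cauchy_seq {T : Type} (d : T -> T -> R) (u : nat -> T) :=
  forall e : R, 0 < e -> exists N : nat, forall m n : nat,
    (N <= m)%N -> (N <= n)%N -> d (u m) (u n) < e.

Definition converges_to {T : Type} (d : T -> T -> R) (u : nat -> T) (l : T) :=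
  forall e : R, 0 < e -> exists N : nat, forall n : nat,
    (N <= n)%N -> d (u n) l < e.

Record structure (L : language) := Structure {
  carrier :> Type;
  dist : carrier -> carrier -> R;
  fint : forall f : fsym L, ('I_(farity f) -> carrier) -> carrier;
  rint : forall r : rsym L, ('I_(rarity r) -> carrier) -> R;
  carrier_inhabited : inhabited carrier;
  dist_ge0 : forall x y, 0 <= dist x y;
  dist_le1 : forall x y, dist x y <= 1;
  dist_refl : forall x, dist x x = 0;
  dist_sep : forall x y, dist x y = 0 -> x = y;
  dist_sym : forall x y, dist x y = dist y x;
  dist_triangle : forall x y z, dist x z <= dist x y + dist y z;
  dist_complete : forall u : nat -> carrier, cauchy_seq dist u ->
                    exists l, converges_to dist u l;
  fint_lipschitz : forall f, lipschitz_fun dist (@fint f);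
  rint_range : forall r x, 0 <= @rint r x <= 1;
  rint_lipschitz : forall r, lipschitz_pred dist (@rint r) }.
Arguments fint {L} s f _.
Arguments rint {L} s r _.
Arguments dist {L} s _ _.

Definition upd {T : Type} (s : nat -> T) (x : nat) (a : T) : nat -> T :=
  fun v => if v == x then a else s v.

Fixpoint teval {L : language} (M : structure L) (s : nat -> M) (t : term L) : M :=
  match t with
  | TVar n => s n
  | TApp f ts => fint M f (fun i => teval M s (ts i))
  end.

Fixpoint feval {L : language} (M : structure L) (phi : formula L) (s : nat -> M)
    : R :=
  match phi with
  | FOne => 1
  | FDist t1 t2 => dist M (teval M s t1) (teval M s t2)
  | FRel r ts => rint M r (fun i => teval M s (ts i))
  | FScale c psi => c * feval M psi s
  | FAdd psi chi => feval M psi s + feval M chi s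
  | FInf x psi => inf (range (fun a : M => feval M psi (upd s x a)))
  | FSup x psi => sup (range (fun a : M => feval M psi (upd s x a)))
  end.

Definition models {L : language} (M : structure L) (T : set (formula L)) :=
  forall phi, T phi -> forall s : nat -> M, feval M phi s <= 0.

Definition complete_theory {L : language} (T : set (formula L)) :=
  (forall phi, T phi -> sentence phi) /\
  (exists M : structure L, models M T) /\
  (forall (M1 M2 : structure L), models M1 T -> models M2 T ->
     forall phi, sentence phi ->
     forall (s1 : nat -> M1) (s2 : nat -> M2), feval M1 phi s1 = feval M2 phi s2).

(* M ⊆ N, with M identified with its image under the inclusion map [iota]. *)
Definition substructure {L : language} {M N : structure L} (iota : M -> N) :=
  (forall a b : M, dist N (iota a) (iota b) = dist M a b) /\
  (forall f (xs : 'I_(farity f) -> M), iota (fint M f xs) = fint N f (iota \o xs)) /\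
  (forall r (xs : 'I_(rarity r) -> M), rint N r (iota \o xs) = rint M r xs).

Definition elementary_substructure {L : language} {M N : structure L}
    (iota : M -> N) :=
  substructure iota /\
  forall (phi : formula L) (s : nat -> M), feval N phi (iota \o s) = feval M phi s.

(* P : M -> R is A-definable: a uniform limit on M of the predicates
   x |-> phi(x, a) where phi is an affine formula whose free variables other
   than x (= variable 0) are assigned parameters from A. *)
Definition definable_pred {L : language} {M : structure L} (A : set M)
    (P : M -> R) :=
  forall e : R, 0 < e ->
    exists (phi : formula L) (s : nat -> M),
      (forall v, v <> 0%N -> ffree v phi -> A (s v)) /\
      (forall x : M, `|P x - feval M phi (upd s 0%N x)| <= e).

Definition definable_elt {L : language} {M : structure L} (A : set M) (a : M) :=
  definable_pred A (fun x => dist M x a).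

Definition dcl {L : language} {M : structure L} (A : set M) : set M :=
  [set a | definable_elt A a].

(* Since M ≼ N, a uniform bound sup_x (φ(x) - ψ(x)) <= e over M with parameters
   from M is expressed by an affine sentence with parameters, hence holds over N.
   Applied to φ(x) and d(x, a) (a moved into a fresh variable), this shows that
   an approximation of d(-, a) over M remains one over N, so dcl_M(A) ⊆ dcl_N(A).
   Conversely, let b ∈ dcl_N(A) and let φ(x) approximate d(x, b) within e/3.
   If no point of M were within e of b, then φ >= 2e/3 on M, hence on N, while
   φ(b) <= e/3. So points of M come arbitrarily close to b; as M is complete,
   b ∈ M, and the same approximations restricted to M show b ∈ dcl_M(A). *)
From mathcomp Require Import all_boot all_order all_algebra.
From mathcomp Require Import classical_sets boolp reals Rstruct.
From mathcomp Require Import lra.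
Import Order.TTheory GRing.Theory Num.Theory.
Local Open Scope ring_scope.
Local Open Scope classical_set_scope.

Fixpoint term_nested_ind {L : language} (P : term L -> Prop)
    (HV : forall n, P (TVar n))
    (HA : forall f ts, (forall i, P (ts i)) -> P (TApp f ts)) (t : term L) : P t :=
  match t with
  | TVar n => HV n
  | TApp f ts => HA f ts (fun i => term_nested_ind P HV HA (ts i))
  end.

Section Syntax.
Context {L : language}.

Lemma teval_ext (M : structure L) (s1 s2 : nat -> M) (t : term L) :
  (forall v, tfree v t -> s1 v = s2 v) -> teval M s1 t = teval M s2 t.
Proof.
elim/(@term_nested_ind L): t => [n|f ts IH] Hs /=; first exact: Hs.
by congr (fint M f _); apply/funext => i; apply: IH => v Hv; apply: Hs; exists i.
Qed.

Lemma feval_ext (M : structure L) (phi : formula L) (s1 s2 : nat -> M) :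
  (forall v, ffree v phi -> s1 v = s2 v) -> feval M phi s1 = feval M phi s2.
Proof.
elim: phi s1 s2 => [|t1 t2|r ts|c psi IH|psi IH1 chi IH2|x psi IH|x psi IH] s1 s2 Hs /=.
- by [].
- by rewrite (@teval_ext M s1 s2 t1) ?(@teval_ext M s1 s2 t2) // => v Hv;
    apply: Hs; [right|left].
- congr (rint M r _); apply: funext => i.
  by apply: (@teval_ext M) => v Hv; apply: Hs; exists i.
- by rewrite (IH _ s2).
- by rewrite (IH1 _ s2) ?(IH2 _ s2) // => v Hv; apply: Hs; [right|left].
- rewrite (_ : (fun a => feval M psi (upd s1 x a)) =
                 (fun a => feval M psi (upd s2 x a))) //.
  apply/funext => a; apply: IH => v hv.
  by rewrite /upd; case: eqP => // vx; apply: Hs.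
- rewrite (_ : (fun a => feval M psi (upd s1 x a)) =
                 (fun a => feval M psi (upd s2 x a))) //.
  apply/funext => a; apply: IH => v hv.
  by rewrite /upd; case: eqP => // vx; apply: Hs.
Qed.

Lemma tfree_bounded (t : term L) : exists m, forall v, tfree v t -> (v < m)%N.
Proof.
elim/(@term_nested_ind L): t => [n|f ts IH]; first by exists n.+1 => v /= ->.
have [mf Hmf] := choice IH.
exists (\max_(i < farity f) mf i) => v /= [i Hi].
exact: leq_trans (Hmf i v Hi) (leq_bigmax i).
Qed.

Lemma ffree_bounded (phi : formula L) : exists m, forall v, ffree v phi -> (v < m)%N.
Proof.
elim: phi => [|t1 t2|r ts|c psi IH|psi IH1 chi IH2|x psi IH|x psi IH].
- by exists 0%N.
- have [m1 H1] := tfree_bounded t1; have [m2 H2] := tfree_bounded t2.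
  by exists (maxn m1 m2) => v /= [/H1|/H2] h; rewrite leq_max h ?orbT.
- have [mf Hmf] := choice (fun i => tfree_bounded (ts i)).
  exists (\max_(i < rarity r) mf i) => v /= [i Hi].
  exact: leq_trans (Hmf i v Hi) (leq_bigmax i).
- exact: IH.
- have [m1 H1] := IH1; have [m2 H2] := IH2.
  by exists (maxn m1 m2) => v /= [/H1|/H2] h; rewrite leq_max h ?orbT.
- by have [m Hm] := IH; exists m => v /= [_ /Hm].
- by have [m Hm] := IH; exists m => v /= [_ /Hm].
Qed.

Lemma exists_fresh_var (phi : formula L) : exists k, (0 < k)%N /\ ~ ffree k phi.
Proof.
have [m Hm] := ffree_bounded phi.
by exists m.+1; split => // /Hm; rewrite ltnNge leqnSn.
Qed.

End Syntax.

Lemma upd_same {T} (s : nat -> T) x a : upd s x a x = a.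
Proof. by rewrite /upd eqxx. Qed.

Lemma upd_other {T} (s : nat -> T) x a y : y != x -> upd s x a y = s y.
Proof. by rewrite /upd => /negbTE ->. Qed.

Lemma upd_comm {T} (s : nat -> T) x y a b :
  x != y -> upd (upd s x a) y b = upd (upd s y b) x a.
Proof.
move=> xy; apply/funext => v; rewrite /upd.
by case: (eqVneq v y) => [->|//]; rewrite eq_sym (negbTE xy).
Qed.

Lemma upd_comp {T U} (f : T -> U) (s : nat -> T) x a :
  upd (f \o s) x (f a) = f \o upd s x a.
Proof. by apply/funext => v; rewrite /upd /comp; case: eqP. Qed.

Definition fdiff {L : language} (phi psi : formula L) : formula L :=
  FAdd phi (FScale (-1) psi).

Section Semantics.
Context {L : language} (M : structure L).

Lemma range_nonempty (g : M -> R) : range g !=set0.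
Proof. by case: (carrier_inhabited _ M) => x; exists (g x), x. Qed.

Lemma feval_bounded (phi : formula L) : exists B : R, forall s, `|feval M phi s| <= B.
Proof.
elim: phi => [|t1 t2|r ts|c psi IH|psi IH1 chi IH2|x psi IH|x psi IH].
- by exists 1 => s /=; rewrite normr1.
- by exists 1 => s /=; rewrite ger0_norm ?dist_ge0 ?dist_le1.
- exists 1 => s /=.
  by have /andP[h0 h1] := rint_range _ M r (fun i => teval M s (ts i)); rewrite ger0_norm.
- by have [B HB] := IH; exists (`|c| * B) => s /=; rewrite normrM ler_wpM2l.
- have [B1 H1] := IH1; have [B2 H2] := IH2; exists (B1 + B2) => s /=.
  exact: le_trans (ler_normD _ _) (lerD (H1 s) (H2 s)).
- have [B HB] := IH; exists B => s /=.
  have [_ [a0 _ _]] := range_nonempty (fun a => feval M psi (upd s x a)).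
  have lbB : lbound (range (fun a => feval M psi (upd s x a))) (- B).
    by move=> _ [a _ <-]; have := HB (upd s x a); rewrite ler_norml => /andP[].
  have inf_le : inf (range (fun a => feval M psi (upd s x a))) <= feval M psi (upd s x a0).
    by apply: ge_inf; [exists (- B) | exists a0].
  have := HB (upd s x a0); rewrite !ler_norml => /andP[_ h].
  by rewrite (lb_le_inf (range_nonempty _) lbB) (le_trans inf_le h).
- have [B HB] := IH; exists B => s /=.
  have [_ [a0 _ _]] := range_nonempty (fun a => feval M psi (upd s x a)).
  have ubB : ubound (range (fun a => feval M psi (upd s x a))) B.
    by move=> _ [a _ <-]; have := HB (upd s x a); rewrite ler_norml => /andP[].
  have le_sup : feval M psi (upd s x a0) <= sup (range (fun a => feval M psi (upd s x a))).
    by apply: ub_le_sup; [exists B | exists a0].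
  have := HB (upd s x a0); rewrite !ler_norml => /andP[h _].
  by rewrite (ge_sup (range_nonempty _) ubB) (le_trans h le_sup).
Qed.

Lemma feval_sup_ge x psi s (a : M) : feval M psi (upd s x a) <= feval M (FSup x psi) s.
Proof.
have [B HB] := feval_bounded psi; apply: ub_le_sup; last by exists a.
by exists B => _ [c _ <-]; have := HB (upd s x c); rewrite ler_norml => /andP[].
Qed.

Lemma feval_sup_le x psi s e :
  (forall a : M, feval M psi (upd s x a) <= e) -> feval M (FSup x psi) s <= e.
Proof. by move=> He; apply: ge_sup; [exact: range_nonempty | move=> _ [a _ <-]]. Qed.

Lemma feval_fdiff phi psi s : feval M (fdiff phi psi) s = feval M phi s - feval M psi s.
Proof. by rewrite /= mulN1r. Qed.

Lemma feval_upd_fresh k c phi s :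
  ~ ffree k phi -> feval M phi (upd s k c) = feval M phi s.
Proof.
move=> k_fresh; apply: feval_ext => v hv; rewrite upd_other //.
by apply/eqP => vk; rewrite vk in hv.
Qed.

End Semantics.

Lemma isometry_image_closed {L : language} (M N : structure L) (f : M -> N) (b : N) :
  (forall x y, dist N (f x) (f y) = dist M x y) ->
  (forall e : R, 0 < e -> exists x, dist N (f x) b <= e) -> exists a, f a = b.
Proof.
move=> f_isom near_b.
have inv_gt0 n : 0 < n.+1%:R^-1 :> R by rewrite invr_gt0 ltr0Sn.
have [xs xsE] := choice (fun n => near_b _ (inv_gt0 n)).
have inv_le K n : (K <= n)%N -> n.+1%:R^-1 <= K.+1%:R^-1 :> R.
  by move=> Kn; rewrite lef_pV2 ?posrE ?ltr0Sn // ler_nat ltnS.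
have inv_small (e : R) : 0 < e -> exists K : nat, K.+1%:R^-1 < e.
  by move=> e0; have [K] := ltr_add_invr e0; rewrite add0r; exists K.
have xs_cauchy : cauchy_seq (dist M) xs.
  move=> e e0; have [K HK] := inv_small (e / 2) ltac:(lra).
  exists K => m n Km Kn; rewrite -f_isom.
  have := dist_triangle _ N (f (xs m)) b (f (xs n)); rewrite (dist_sym _ N b).
  move: (xsE m) (xsE n) (inv_le _ _ Km) (inv_le _ _ Kn) HK.
  move: (K.+1%:R^-1) (m.+1%:R^-1) (n.+1%:R^-1) => u v w; lra.
have [a xs_to_a] := dist_complete _ M xs xs_cauchy.
exists a; apply: (dist_sep _ N); apply/eqP; rewrite eq_le dist_ge0 andbT.
apply/ler_addgt0Pr => e e0; rewrite add0r.
have [K1 HK1] := xs_to_a (e / 2) ltac:(lra).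
have [K2 HK2] := inv_small (e / 2) ltac:(lra).
pose n := maxn K1 K2.
have := dist_triangle _ N (f a) (f (xs n)) b; rewrite f_isom (dist_sym _ M a).
move: (HK1 n (leq_maxl _ _)) (xsE n) (inv_le K2 n (leq_maxr _ _)) HK2.
move: (K2.+1%:R^-1) (n.+1%:R^-1) => u v; lra.
Qed.

Section Elementary.
Context {L : language} {M N : structure L} {iota : M -> N}.
Hypothesis iota_elem : elementary_substructure iota.

Lemma elementary_dist x y : dist N (iota x) (iota y) = dist M x y.
Proof. by case: iota_elem => [[]]. Qed.

Lemma elementary_feval phi s : feval N phi (iota \o s) = feval M phi s.
Proof. by case: iota_elem. Qed.

Lemma elementary_feval_upd phi s x a :
  feval N phi (upd (iota \o s) x (iota a)) = feval M phi (upd s x a).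
Proof. by rewrite upd_comp elementary_feval. Qed.

Lemma elementary_upper_bound phi x s e :
  (forall a : M, feval M phi (upd s x a) <= e) ->
  forall y : N, feval N phi (upd (iota \o s) x y) <= e.
Proof.
move=> He y; apply: le_trans (feval_sup_ge _ _ _ _ y) _.
by rewrite elementary_feval; apply: feval_sup_le.
Qed.

Lemma elementary_lower_bound {phi x s e} :
  (forall a : M, e <= feval M phi (upd s x a)) ->
  forall y : N, e <= feval N phi (upd (iota \o s) x y).
Proof.
move=> He y; rewrite -[e]opprK -[feval N _ _]opprK lerN2 -mulN1r.
apply: (elementary_upper_bound (FScale (-1) phi)) => a /=.
by rewrite mulN1r lerN2.
Qed.

Lemma elementary_dist_approx phi s a e :
  (forall x : M, `|dist M x a - feval M phi (upd s 0%N x)| <= e) ->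
  forall y : N, `|dist N y (iota a) - feval N phi (upd (iota \o s) 0%N y)| <= e.
Proof.
move=> approx y.
have [k [k_gt0 k_fresh]] := exists_fresh_var phi.
have phi_upd (P : structure L) (w : nat -> P) c z :
    feval P phi (upd (upd w k c) 0%N z) = feval P phi (upd w 0%N z).
  by rewrite upd_comm ?(feval_upd_fresh _ k) // -lt0n.
pose dx : formula L := FDist (TVar 0%N) (TVar k).
have dx_upd (P : structure L) (w : nat -> P) c z :
    feval P dx (upd (upd w k c) 0%N z) = dist P z c.
  by rewrite /= upd_same upd_other ?upd_same // -lt0n.
pose t := upd s k a.
have up1 : feval N (fdiff phi dx) (upd (iota \o t) 0%N y) <= e.
  apply: elementary_upper_bound => x; rewrite feval_fdiff phi_upd dx_upd.
  by have := approx x; rewrite ler_norml => /andP[? ?]; lra.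
have up2 : feval N (fdiff dx phi) (upd (iota \o t) 0%N y) <= e.
  apply: elementary_upper_bound => x; rewrite feval_fdiff phi_upd dx_upd.
  by have := approx x; rewrite ler_norml => /andP[? ?]; lra.
move: up1 up2; rewrite !feval_fdiff /t -upd_comp phi_upd dx_upd ler_norml; lra.
Qed.

Lemma dcl_elementary_image A a : dcl A a -> dcl (iota @` A) (iota a).
Proof.
move=> a_def e e0; have [phi [s [s_in_A approx]]] := a_def e e0.
exists phi, (iota \o s); split; last exact: elementary_dist_approx.
by move=> v v0 hv; exists (s v); first exact: s_in_A.
Qed.

Lemma definable_pred_image_params {A} {P : N -> R} : definable_pred (iota @` A) P ->
  forall e : R, 0 < e -> exists (phi : formula L) (s : nat -> M),
    (forall v, v <> 0%N -> ffree v phi -> A (s v)) /\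
    (forall y : N, `|P y - feval N phi (upd (iota \o s) 0%N y)| <= e).
Proof.
move=> P_def e e0; have [phi [s [s_in_A approx]]] := P_def e e0.
case: (carrier_inhabited _ M) => x0.
have preimage v : exists x : M, (exists2 a, A a & iota a = s v) -> A x /\ iota x = s v.
  case: (pselect (exists2 a, A a & iota a = s v)) => [[a Aa <-]|none].
    by exists a.
  by exists x0 => /none.
have [s' s'E] := choice preimage.
exists phi, s'; split.
  by move=> v v0 hv; have [] := s'E v (s_in_A v v0 hv).
move=> y; rewrite -(@feval_ext _ _ _ (upd s 0%N y)) // => v hv.
rewrite /upd /comp; case: eqP => // v0.
by have [_ ->] := s'E v (s_in_A v v0 hv).
Qed.

Lemma dcl_elementary_in_image {A b} : dcl (iota @` A) b -> exists a, iota a = b.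
Proof.
move=> b_def; apply: isometry_image_closed; first exact: elementary_dist.
move=> e e0.
have [phi [s [_ approx]]] := definable_pred_image_params b_def (e / 3) ltac:(lra).
case: (pselect (exists x, dist N (iota x) b <= e)) => // far.
have far_lb x : 2 * e / 3 <= feval M phi (upd s 0%N x).
  have : e < dist N (iota x) b by rewrite ltNge; apply/negP => near; apply: far; exists x.
  by have := approx (iota x); rewrite elementary_feval_upd ler_norml; lra.
have := elementary_lower_bound far_lb b; have := approx b.
by rewrite dist_refl ler_norml; lra.
Qed.

Lemma dcl_elementary_restrict A a : dcl (iota @` A) (iota a) -> dcl A a.
Proof.
move=> a_def e e0; have [phi [s [s_in_A approx]]] := definable_pred_image_params a_def _ e0.
exists phi, s; split => // x.
by have := approx (iota x); rewrite elementary_dist elementary_feval_upd.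
Qed.

End Elementary.

Theorem mainTheorem11 (L : language) (T : set (formula L))
    (M N : structure L) (iota : M -> N) (A : set M) :
  complete_theory T -> models M T -> models N T ->
  elementary_substructure iota ->
  iota @` dcl A = dcl (iota @` A).
Proof.
move=> _ _ _ iota_elem; apply/seteqP; split.
  by move=> _ [a a_def <-]; exact: (dcl_elementary_image iota_elem).
move=> b b_def; have [a a_b] := dcl_elementary_in_image iota_elem b_def.
by exists a => //; apply: (dcl_elementary_restrict iota_elem); rewrite a_b.
Qed.
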